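(* Let $A=\{(\alpha,\beta)\in\mathbb R^2:(\beta-1)^2+4\alpha\beta\ge0,\ \beta<0,\ \alpha\le2\}$ and $\widetilde A=\{(\alpha,\beta)\in\mathbb R^2:\beta>0,\ \alpha\ge1\}$. If $(\alpha,\beta)\in A$, then for every $n\ge1$ the polynomial $P_n^{(\alpha,\beta)}$ has only real zeros. If $(\alpha,\beta)\in\widetilde A$, then for every integer $n$ with $1\le n\le\lceil\alpha\rceil$ the polynomial $P_n^{(\alpha,\beta)}$ has only real zeros, where $\lceil\alpha\rceil$ is the smallest integer $\ge\alpha$.
   Context: For real $\alpha,\beta$ with $\beta\neq0$, the polynomials $P_n^{(\alpha,\beta)}(x)$, $n\ge0$, are defined by $\sum_{n\ge0}P_n^{(\alpha,\beta)}(x)\frac{t^n}{n!}=(1-t)^{\alpha}\exp\big(x((1-t)^{\beta}-1)\big)$ (formal power series in $t$). A polynomial ''has only real zeros'' if all its complex zeros are real. *)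

From Stdlib Require Import Reals Arith ZArith.
Open Scope R_scope.

Definition fps := nat -> R.

Definition fps_mul (a b : fps) : fps :=
  fun n => sum_f_R0 (fun m => a m * b (n - m)%nat) n.

Definition fps_one : fps := fun n => match n with O => 1 | _ => 0 end.

Fixpoint fps_pow (a : fps) (k : nat) : fps :=
  match k with O => fps_one | S k' => fps_mul a (fps_pow a k') end.

Fixpoint falling (g : R) (n : nat) : R :=
  match n with O => 1 | S n' => falling g n' * (g - INR n') end.
Definition gbinom (g : R) (n : nat) : R := falling g n / INR (fact n).

Definition one_minus_t_pow (g : R) : fps := fun n => (-1) ^ n * gbinom g n.

(* u(t) = (1 - t)^beta - 1, a series with zero constant term *)
Definition u_ser (beta : R) : fps :=
  fun n => match n with O => 0 | _ => one_minus_t_pow beta n end.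

(* Coefficient of x^k t^n in exp(x u(t)) = sum_k x^k u(t)^k / k! *)
Definition exp_coef (beta : R) (k n : nat) : R := fps_pow (u_ser beta) k n / INR (fact k).

(* Coefficient of x^k t^n in (1-t)^alpha * exp(x ((1-t)^beta - 1)) *)
Definition gen_coef (alpha beta : R) (k n : nat) : R :=
  fps_mul (one_minus_t_pow alpha) (exp_coef beta k) n.

(* Coefficient of x^k in P_n^{(alpha,beta)}(x) = n! [t^n] of the generating function *)
Definition P_coef (alpha beta : R) (n k : nat) : R :=
  INR (fact n) * gen_coef alpha beta k n.

Definition C := (R * R)%type.
Definition Cadd (z w : C) : C := (fst z + fst w, snd z + snd w).
Definition Cmul (z w : C) : C :=
  (fst z * fst w - snd z * snd w, fst z * snd w + snd z * fst w).
Definition Cofr (r : R) : C := (r, 0).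
Definition C0 : C := (0, 0).
Fixpoint Cpow (z : C) (k : nat) : C :=
  match k with O => (1, 0) | S k' => Cmul z (Cpow z k') end.

Fixpoint Cpoly_eval (c : nat -> R) (d : nat) (z : C) : C :=
  match d with
  | O => Cmul (Cofr (c O)) (Cpow z O)
  | S d' => Cadd (Cpoly_eval c d' z) (Cmul (Cofr (c d)) (Cpow z d))
  end.

(* P_n^{(alpha,beta)} evaluated at z : C.  Its x^k-coefficient vanishes for k > n
   (u(t)^k has t-order >= k), so summing over k <= n gives the whole polynomial. *)
Definition P_eval (alpha beta : R) (n : nat) (z : C) : C :=
  Cpoly_eval (P_coef alpha beta n) n z.

Definition P_only_real_zeros (alpha beta : R) (n : nat) : Prop :=
  forall z : C, P_eval alpha beta n z = C0 -> snd z = 0.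

Definition Rceil (x : R) : Z := (- Int_part (- x))%Z.

(* Applying the derivation (1 - t) d/dt to the generating function gives the recurrence
     P_{n+1} = -b (x P_n' + (x + (a - n)/b) P_n).
   If p has only real zeros and c >= 0, so has x p' + (x + c) p: at a non-real zero z,
   multiplying z p'(z) + (z + c) p(z) = 0 by conj (z p(z)) and taking imaginary parts gives
   Im z * (|z|^2 |p(z)|^2 sum_r 1/|z - r|^2 + c |p(z)|^2) = 0, which is impossible.
   The coefficient c = (a - n)/b is nonnegative for n < a when b > 0, which propagates
   real-rootedness from P_0 = 1; and for n >= 2 when b < 0 and a <= 2, which propagates it from
   P_2, whose discriminant is b^2 ((b - 1)^2 + 4 a b). *)

From Pilot Require Import Defs.
From Stdlib Require Import Reals Lra Lia Factorial.
Open Scope R_scope.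

Lemma fps_mul_eq_l f f' g n : (forall m, f m = f' m) -> fps_mul f g n = fps_mul f' g n.
Proof. intros Hf; unfold fps_mul; apply sum_eq; intros; now rewrite Hf. Qed.

Lemma fps_mul_eq_r f g g' n : (forall m, g m = g' m) -> fps_mul f g n = fps_mul f g' n.
Proof. intros Hg; unfold fps_mul; apply sum_eq; intros; now rewrite Hg. Qed.

Lemma fps_mulDl f g h n :
  fps_mul (fun m => f m + g m) h n = fps_mul f h n + fps_mul g h n.
Proof. unfold fps_mul; rewrite <- plus_sum; apply sum_eq; intros; ring. Qed.

Lemma fps_mulDr f g h n :
  fps_mul h (fun m => f m + g m) n = fps_mul h f n + fps_mul h g n.
Proof. unfold fps_mul; rewrite <- plus_sum; apply sum_eq; intros; ring. Qed.

Lemma fps_mulZl c f h n : fps_mul (fun m => c * f m) h n = c * fps_mul f h n.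
Proof. unfold fps_mul; rewrite scal_sum; apply sum_eq; intros; ring. Qed.

Lemma fps_mulZr c f h n : fps_mul h (fun m => c * f m) n = c * fps_mul h f n.
Proof. unfold fps_mul; rewrite scal_sum; apply sum_eq; intros; ring. Qed.

Lemma fps_mul1l f n : fps_mul fps_one f n = f n.
Proof.
  unfold fps_mul; destruct n as [|n]; [simpl; ring|].
  rewrite decomp_sum by lia; simpl.
  rewrite (sum_eq _ (fun _ => 0)), sum_cte by (intros; ring); ring.
Qed.

Definition fps_euler (f : fps) : fps := fun n => INR n * f n.
Definition fps_deriv (f : fps) : fps := fun n => INR (S n) * f (S n).

(* The derivation (1 - t) d/dt; the binomial series (1 - t)^g are its eigenvectors. *)
Definition fps_omt_deriv (f : fps) : fps := fun n => fps_deriv f n - fps_euler f n.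

Lemma fps_euler_mul f g n :
  fps_euler (fps_mul f g) n = fps_mul (fps_euler f) g n + fps_mul f (fps_euler g) n.
Proof.
  unfold fps_euler, fps_mul; rewrite scal_sum, <- plus_sum.
  apply sum_eq; intros i Hi; rewrite minus_INR by lia; ring.
Qed.

Lemma fps_mul_euler_l_S f g n :
  fps_mul (fps_euler f) g (S n) = fps_mul (fps_deriv f) g n.
Proof.
  unfold fps_mul, fps_euler, fps_deriv; rewrite decomp_sum by lia; simpl pred.
  rewrite Rmult_0_l, Rmult_0_l, Rplus_0_l; apply sum_eq; reflexivity.
Qed.

Lemma fps_mul_euler_r_S f g n :
  fps_mul f (fps_euler g) (S n) = fps_mul f (fps_deriv g) n.
Proof.
  unfold fps_mul, fps_euler, fps_deriv; rewrite tech5, Nat.sub_diag.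
  rewrite Rmult_0_l, Rmult_0_r, Rplus_0_r; apply sum_eq; intros i Hi.
  now replace (S n - i)%nat with (S (n - i)) by lia.
Qed.

Lemma fps_deriv_mul f g n :
  fps_deriv (fps_mul f g) n = fps_mul (fps_deriv f) g n + fps_mul f (fps_deriv g) n.
Proof.
  rewrite <- fps_mul_euler_l_S, <- fps_mul_euler_r_S, <- fps_euler_mul; reflexivity.
Qed.

Lemma fps_omt_deriv_mul f g n :
  fps_omt_deriv (fps_mul f g) n = fps_mul (fps_omt_deriv f) g n + fps_mul f (fps_omt_deriv g) n.
Proof.
  unfold fps_omt_deriv; rewrite fps_deriv_mul, fps_euler_mul.
  unfold fps_mul; rewrite <- !plus_sum, <- minus_sum.
  apply sum_eq; intros; ring.
Qed.

Lemma fps_omt_deriv_binom g n : fps_omt_deriv (one_minus_t_pow g) n = - g * one_minus_t_pow g n.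
Proof.
  unfold fps_omt_deriv, fps_deriv, fps_euler, one_minus_t_pow, gbinom; simpl falling.
  rewrite fact_simpl, mult_INR; simpl pow.
  assert (INR (fact n) <> 0) by apply INR_fact_neq_0.
  assert (INR (S n) <> 0) by (apply not_0_INR; lia).
  field; auto.
Qed.

Lemma fps_omt_deriv_u b n : fps_omt_deriv (u_ser b) n = - b * (u_ser b n + fps_one n).
Proof.
  pose proof (fps_omt_deriv_binom b n) as H; unfold fps_omt_deriv, fps_deriv, fps_euler in *.
  destruct n as [|n]; [|simpl fps_one; unfold u_ser; rewrite H; ring].
  unfold u_ser, one_minus_t_pow, gbinom; simpl; field.
Qed.

Lemma fps_omt_deriv_u_pow b k n :
  fps_omt_deriv (fps_pow (u_ser b) k) n =
  - b * INR k * (fps_pow (u_ser b) k n + fps_pow (u_ser b) (pred k) n).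
Proof.
  revert n; induction k as [|k IH]; intro n.
  - unfold fps_omt_deriv, fps_deriv, fps_euler; destruct n; simpl; ring.
  - simpl fps_pow; rewrite fps_omt_deriv_mul.
    rewrite (fps_mul_eq_l _ (fun m => - b * (u_ser b m + fps_one m)))
      by (intro; apply fps_omt_deriv_u).
    rewrite (fps_mul_eq_r (u_ser b) _
               (fun m => - b * INR k * (fps_pow (u_ser b) k m + fps_pow (u_ser b) (pred k) m)))
      by (intro; apply IH).
    rewrite fps_mulZl, fps_mulDl, fps_mul1l, fps_mulZr, fps_mulDr.
    change (fps_mul (u_ser b) (fps_pow (u_ser b) k) n) with (fps_pow (u_ser b) (S k) n).
    destruct k as [|k]; simpl pred; [simpl; ring|].
    change (fps_mul (u_ser b) (fps_pow (u_ser b) k) n) with (fps_pow (u_ser b) (S k) n).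
    rewrite (S_INR (S k)); ring.
Qed.

Definition gen_term (a b : R) (k : nat) : fps :=
  fps_mul (one_minus_t_pow a) (fps_pow (u_ser b) k).

Lemma fps_omt_deriv_gen_term a b k n :
  fps_omt_deriv (gen_term a b k) n =
  - (a + b * INR k) * gen_term a b k n - b * INR k * gen_term a b (pred k) n.
Proof.
  unfold gen_term at 1; rewrite fps_omt_deriv_mul.
  rewrite (fps_mul_eq_l _ (fun m => - a * one_minus_t_pow a m))
    by (intro; apply fps_omt_deriv_binom).
  rewrite (fps_mul_eq_r (one_minus_t_pow a) _
             (fun m => - b * INR k * (fps_pow (u_ser b) k m + fps_pow (u_ser b) (pred k) m)))
    by (intro; apply fps_omt_deriv_u_pow).
  rewrite fps_mulZl, fps_mulZr, fps_mulDr; unfold gen_term; ring.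
Qed.

Lemma gen_term_succ a b k n :
  gen_term a b k (S n) =
  ((INR n - a - b * INR k) * gen_term a b k n - b * INR k * gen_term a b (pred k) n)
  / INR (S n).
Proof.
  pose proof (fps_omt_deriv_gen_term a b k n) as H; unfold fps_omt_deriv, fps_deriv, fps_euler in H.
  assert (INR (S n) <> 0) by (apply not_0_INR; lia).
  apply (Rmult_eq_reg_l (INR (S n))); [|assumption].
  field_simplify; [lra | assumption].
Qed.

Lemma u_pow_vanish b k n : (n < k)%nat -> fps_pow (u_ser b) k n = 0.
Proof.
  revert n; induction k as [|k IH]; intros n Hn; [lia|].
  simpl fps_pow; unfold fps_mul.
  rewrite (sum_eq _ (fun _ => 0)), sum_cte; [ring|].
  intros [|i] Hi; [simpl; ring | rewrite IH by lia; ring].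
Qed.

Lemma gen_term_vanish a b k n : (n < k)%nat -> gen_term a b k n = 0.
Proof.
  intro Hn; unfold gen_term, fps_mul.
  rewrite (sum_eq _ (fun _ => 0)), sum_cte; [ring|].
  intros i Hi; rewrite u_pow_vanish by lia; ring.
Qed.

Lemma P_coefE a b n k : P_coef a b n k = INR (fact n) * gen_term a b k n / INR (fact k).
Proof.
  unfold P_coef, gen_coef, exp_coef.
  rewrite (fps_mul_eq_r _ _ (fun m => / INR (fact k) * fps_pow (u_ser b) k m))
    by (intro; unfold Rdiv; ring).
  rewrite fps_mulZr; unfold gen_term, Rdiv; ring.
Qed.

Lemma P_coef_vanish a b n k : (n < k)%nat -> P_coef a b n k = 0.
Proof. intro H; rewrite P_coefE, gen_term_vanish by lia; unfold Rdiv; ring. Qed.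

Lemma P_coef00 a b : P_coef a b 0 0 = 1.
Proof.
  rewrite P_coefE; unfold gen_term, fps_mul, one_minus_t_pow, gbinom; simpl; field.
Qed.

Lemma P_coef_succ0 a b n : P_coef a b (S n) 0 = (INR n - a) * P_coef a b n 0.
Proof.
  rewrite !P_coefE, gen_term_succ, fact_simpl, mult_INR.
  assert (INR (fact n) <> 0) by apply INR_fact_neq_0.
  assert (INR (S n) <> 0) by (apply not_0_INR; lia).
  simpl (INR 0); simpl (fact 0); simpl (INR 1); field; auto.
Qed.

Lemma P_coef_succS a b n k :
  P_coef a b (S n) (S k) =
  (INR n - a - b * INR (S k)) * P_coef a b n (S k) - b * P_coef a b n k.
Proof.
  rewrite !P_coefE, gen_term_succ, fact_simpl, mult_INR; simpl pred.
  rewrite (fact_simpl k), mult_INR.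
  assert (INR (fact n) <> 0) by apply INR_fact_neq_0.
  assert (INR (fact k) <> 0) by apply INR_fact_neq_0.
  assert (INR (S n) <> 0) by (apply not_0_INR; lia).
  assert (INR (S k) <> 0) by (apply not_0_INR; lia).
  field; auto.
Qed.

Lemma Rceil_gt_nat a N m : (Z.of_nat N <= Rceil a)%Z -> (m < N)%nat -> INR m < a.
Proof.
  intros H Hm; unfold Rceil, Int_part in H.
  destruct (archimed (- a)) as [Hup _].
  assert (HN : IZR (Z.of_nat N) <= 1 - IZR (up (- a)))
    by (rewrite <- minus_IZR; apply IZR_le; lia).
  assert (INR (S m) <= INR N) by (apply le_INR; lia).
  rewrite <- INR_IZR_INZ, S_INR in *; lra.
Qed.

From mathcomp Require Import all_boot all_order all_algebra.
From mathcomp Require Import Rstruct complex ring lra.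
Import Order.TTheory GRing.Theory Num.Theory.
Local Open Scope ring_scope.
Local Open Scope complex_scope.

Local Notation toC := (real_complex R).
Local Notation re := (@complex.Re R).
Local Notation im := (@complex.Im R).

Lemma normc2_gt0 (u : R[i]) : u != 0 -> 0 < re u ^+ 2 + im u ^+ 2.
Proof.
case: u => a b; rewrite eq_complex /= => ab.
by rewrite /= lt0r addr_ge0 ?sqr_ge0 // andbT paddr_eq0 ?sqr_ge0 // !sqrf_eq0.
Qed.

(* The witness is K = |P(z)|^2 * sum_(r <- s) 1 / |z - r|^2. *)
Lemma Im_deriv_mul_conj (c z : R[i]) (s : seq R[i]) :
  all (fun r => im r == 0) s ->
  let P := c *: \prod_(r <- s) ('X - r%:P) in
  exists2 K : R, 0 <= K &
    im (P^`().[z] * P.[z]^*) = - im z * K /\ (P.[z] != 0 -> s != [::] -> 0 < K).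
Proof.
elim: s => [|r s IH] /=.
  by move=> _; exists 0 => //; rewrite big_nil alg_polyC derivC horner0 mul0r mulr0.
move=> /andP [/eqP im_r s_real].
have [K' K'_ge0 [HK' _]] := IH s_real.
rewrite big_cons scalerAr; set P' := c *: _ in HK' *.
rewrite derivM derivXsubC mul1r hornerD !hornerM hornerXsubC.
move: HK'; move: (P'.[z]) (P'^`().[z]) => u v HK'.
exists (re u ^+ 2 + im u ^+ 2 + ((re z - re r) ^+ 2 + im z ^+ 2) * K').
  by apply: addr_ge0; [apply: addr_ge0 | apply: mulr_ge0 => //; apply: addr_ge0]; apply: sqr_ge0.
split.
  clear IH; move: HK'; case: z r u v im_r => [x y] [r1 r2] [u1 u2] [v1 v2] /= -> HK'.
  rewrite /conjc; simpc => /=.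
  have -> : - (y * (u1 ^+ 2 + u2 ^+ 2 + ((x - r1) ^+ 2 + y ^+ 2) * K')) =
            - y * (u1 ^+ 2 + u2 ^+ 2) + ((x - r1) ^+ 2 + y ^+ 2) * (- y * K') by ring.
  by rewrite -HK'; ring.
rewrite mulf_eq0 negb_or => /andP[_ /normc2_gt0 u_gt0] _.
have : 0 <= ((re z - re r) ^+ 2 + im z ^+ 2) * K'.
  by apply: mulr_ge0 => //; apply: addr_ge0; apply: sqr_ge0.
lra.
Qed.

(* Multiply [z v + (z + a) u = 0] by [conj z * conj u] and take imaginary parts. *)
Lemma Im_mul_conj_of_eq0 (a : R) (z u v : R[i]) : z * v + (z + a%:C) * u = 0 ->
  im (v * u^*) * (re z ^+ 2 + im z ^+ 2) = a * im z * (re u ^+ 2 + im u ^+ 2).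
Proof.
move=> /(congr1 (fun w => im (z^* * u^* * w))); rewrite mulr0.
case: z u v => [x y] [u1 u2] [v1 v2]; rewrite /conjc /real_complex_def; simpc => /= E.
lra.
Qed.

Definition real_rooted (p : {poly R}) : Prop :=
  forall z : R[i], root (map_poly toC p) z -> im z = 0.

Lemma real_rooted_neq0 (p : {poly R}) : real_rooted p -> p != 0.
Proof.
move=> rp; apply/eqP => p0; have := rp 'i.
by rewrite p0 map_poly0 root0 => /(_ isT) /eqP; rewrite oner_eq0.
Qed.

Lemma real_rooted_XderivD (p : {poly R}) (a : R) : real_rooted p -> 0 <= a ->
  real_rooted ('X * p^`() + ('X + a%:P) * p).
Proof.
move=> rp a_ge0 z; apply: contraTeq => imz0.
set P := map_poly toC p.
have Pz0 : P.[z] != 0 by apply: contra imz0 => /rp ->.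
have [s hP] := closed_field_poly_normal P.
have s_real : all (fun r => im r == 0) s.
  apply/allP => r r_s; apply/eqP/rp; rewrite -/P hP rootZ ?root_prod_XsubC //.
  by rewrite lead_coef_eq0 map_poly_eq0 real_rooted_neq0.
rewrite /root rmorphD !rmorphM /= map_polyX rmorphD /= map_polyX map_polyC /= -deriv_map -/P.
rewrite !(hornerD, hornerM) hornerX hornerC; apply/eqP => E.
case: s hP s_real => [|r s] hP s_real.
  have dP0 : P^`() = 0 by rewrite hP big_nil alg_polyC derivC.
  move: E; rewrite dP0 horner0 mulr0 add0r => /eqP.
  rewrite mulf_eq0 (negbTE Pz0) orbF => /eqP /(congr1 im).
  by case: (z) imz0 => x y /=; rewrite addr0 => /eqP.
have nz_gt0 : 0 < re z ^+ 2 + im z ^+ 2 by apply: normc2_gt0; apply: contraNneq imz0 => ->.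
have [K _ [HK K_gt0]] := @Im_deriv_mul_conj (lead_coef P) z _ s_real.
rewrite -hP in HK K_gt0; have {}K_gt0 := K_gt0 Pz0 isT.
have := Im_mul_conj_of_eq0 _ _ _ _ E; rewrite HK => HE.
have : im z * (K * (re z ^+ 2 + im z ^+ 2) + a * (re P.[z] ^+ 2 + im P.[z] ^+ 2)) = 0
  by lra.
move/eqP; rewrite mulf_eq0 (negbTE imz0) /= => /eqP.
have := mulr_gt0 K_gt0 nz_gt0; have := mulr_ge0 a_ge0 (ltW (normc2_gt0 _ Pz0)).
lra.
Qed.

Lemma real_rootedZ (c : R) (p : {poly R}) : c != 0 -> real_rooted p -> real_rooted (c *: p).
Proof.
by move=> c0 rp z; rewrite map_polyZ rootZ ?fmorph_eq0 //; apply: rp.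
Qed.

Lemma real_rooted1 : real_rooted 1.
Proof. by move=> z; rewrite rmorph1 (negbTE (root1 z)). Qed.

Lemma real_rooted_deg2 (p : {poly R}) : (size p <= 3)%N ->
  (p`_1 != 0) || (p`_2 != 0) -> 0 <= p`_1 ^+ 2 - 4 * p`_0 * p`_2 -> real_rooted p.
Proof.
move=> size_p p12 disc_ge0 z.
have size_Cp : (size (map_poly toC p) <= 3)%N by rewrite size_map_poly.
rewrite /root (horner_coef_wide _ size_Cp) !big_ord_recl big_ord0 !coef_map /=.
case: z => x y; rewrite /real_complex_def /bump /=; simpc => /eqP [E1 E2].
apply/eqP/negPn/negP => y0.
have : y * (p`_1 + 2 * p`_2 * x) = 0 by lra.
move/eqP; rewrite mulf_eq0 (negbTE y0) /= => /eqP lin.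
have [p2_0 | p2_0] := eqVneq p`_2 0.
  by move: p12 lin; rewrite p2_0 eqxx orbF mulr0 mul0r addr0 => /eqP.
have p2y_gt0 : 0 < (p`_2 * y) ^+ 2 by rewrite exprn_even_gt0 // mulf_neq0.
have : p`_1 ^+ 2 - 4 * p`_0 * p`_2 + 4 * (p`_2 * y) ^+ 2 =
       - 4 * p`_2 * (p`_0 + (p`_1 * x + p`_2 * (x * x - y * y)))
       + (p`_1 + 2 * p`_2 * x) ^+ 2 by ring.
rewrite E1 lin; lra.
Qed.

Definition Ppoly (a b : R) (n : nat) : {poly R} := \poly_(k < n.+1) P_coef a b n k.

Lemma coef_Ppoly (a b : R) n k : (Ppoly a b n)`_k = P_coef a b n k.
Proof.
by rewrite coef_poly; case: ltnP => // nk; rewrite P_coef_vanish //; apply/ssrnat.ltP.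
Qed.

Lemma Ppoly0 (a b : R) : Ppoly a b 0 = 1.
Proof.
apply/polyP => -[|k]; rewrite coef_Ppoly coef1 /=; first exact: P_coef00.
by rewrite P_coef_vanish //; apply/ssrnat.ltP.
Qed.

Lemma Ppoly_succ (a b : R) n : b != 0 ->
  Ppoly a b n.+1 = (- b) *: ('X * (Ppoly a b n)^`() + ('X + ((a - n%:R) / b)%:P) * Ppoly a b n).
Proof.
move=> b0; apply/polyP => k.
rewrite coefZ coefD coefXM mulrDl coefD coefXM coefCM !coef_Ppoly.
case: k => [|k] /=.
  by rewrite P_coef_succ0 !RealsE; field.
by rewrite coef_deriv coef_Ppoly P_coef_succS !RealsE -mulr_natr; field.
Qed.

Lemma real_rooted_Ppoly_from (a b : R) n N : b != 0 -> (n <= N)%N ->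
  (forall j, (n <= j < N)%N -> 0 <= (a - j%:R) / b) ->
  real_rooted (Ppoly a b n) -> real_rooted (Ppoly a b N).
Proof.
move=> b0 + + rn; elim: N => [|N IH] nN ab.
  by move: nN; rewrite leqn0 => /eqP <-.
move: nN; rewrite leq_eqVlt => /orP[/eqP <- // | nN].
rewrite Ppoly_succ //; apply: real_rootedZ; first by rewrite oppr_eq0.
apply: real_rooted_XderivD; last by apply: ab; rewrite -ltnS nN /=.
by apply: IH => // j /andP[nj jN]; apply: ab; rewrite nj ltnS ltnW.
Qed.

Definition complex_of_pair (z : Defs.C) : R[i] := z.1 +i* z.2.

Lemma Cpow_complex (z : Defs.C) k :
  Cpow z k = (re (complex_of_pair z ^+ k), im (complex_of_pair z ^+ k)).
Proof.
elim: k => [|k IH] //=; rewrite {}IH exprS.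
by case: (_ ^+ k) => c d; case: z.
Qed.

Lemma Cpoly_eval_horner (c : nat -> R) d (z : Defs.C) :
  let w := (map_poly toC (\poly_(k < d.+1) c k)).[complex_of_pair z] in
  Cpoly_eval c d z = (re w, im w).
Proof.
have size_p : (size (map_poly toC (\poly_(k < d.+1) c k)) <= d.+1)%N.
  by rewrite size_map_poly size_poly.
rewrite /= (horner_coef_wide _ size_p).
under eq_bigr => k _ do rewrite coef_map coef_poly ltn_ord.
clear size_p; elim: d => [|d IH]; first by rewrite big_ord1.
rewrite -[Cpoly_eval c d.+1 z]/(Cadd (Cpoly_eval c d z) (Cmul (Cofr (c d.+1)) (Cpow z d.+1))).
rewrite big_ord_recr IH Cpow_complex.
by case: (\sum_(_ < _) _) => u1 u2; case: (_ ^+ d.+1) => w1 w2.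
Qed.

Lemma real_rooted_P_only_real_zeros (a b : R) n :
  real_rooted (Ppoly a b n) -> P_only_real_zeros a b n.
Proof.
move=> rp z; rewrite /P_eval Cpoly_eval_horner => -[re0 im0].
apply: (rp (complex_of_pair z)); apply/eqP.
by move: re0 im0; case: (_.[_]) => x y /= -> ->.
Qed.

Lemma coef_Ppoly1 (a b : R) :
  [/\ (Ppoly a b 1)`_0 = - a, (Ppoly a b 1)`_1 = - b & (Ppoly a b 1)`_2 = 0].
Proof.
have P01 : P_coef a b 0 1 = 0 by rewrite P_coef_vanish.
rewrite !coef_Ppoly P_coef_succ0 P_coef_succS P01 P_coef00 P_coef_vanish //.
by split; rewrite !RealsE /=; ring.
Qed.

Lemma coef_Ppoly2 (a b : R) :
  [/\ (Ppoly a b 2)`_0 = a ^+ 2 - a, (Ppoly a b 2)`_1 = b ^+ 2 + 2 * a * b - b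
    & (Ppoly a b 2)`_2 = b ^+ 2].
Proof.
have [] := coef_Ppoly1 a b; rewrite !coef_Ppoly => P10 P11 P12.
rewrite P_coef_succ0 !(P_coef_succS a b 1) P10 P11 P12.
by split; rewrite !RealsE /=; ring.
Qed.

Lemma real_rooted_Ppoly_neg (a b : R) n : 0 <= (b - 1) ^+ 2 + 4 * a * b -> b < 0 -> a <= 2 ->
  (0 < n)%N -> real_rooted (Ppoly a b n).
Proof.
move=> disc_ge0 b_lt0 a_le2 n_gt0; have b_neq0 := ltr0_neq0 b_lt0.
have rr2 : real_rooted (Ppoly a b 2).
  have [P0 P1 P2] := coef_Ppoly2 a b.
  apply: real_rooted_deg2; first exact: size_poly.
    by rewrite P2 sqrf_eq0 b_neq0 orbT.
  rewrite P0 P1 P2 (_ : _ - _ = b ^+ 2 * ((b - 1) ^+ 2 + 4 * a * b)); last by ring.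
  by rewrite mulr_ge0 ?sqr_ge0.
case: n n_gt0 => [|[|[|n]]] // _.
  have [_ P1 P2] := coef_Ppoly1 a b.
  apply: real_rooted_deg2; first exact: (leq_trans (size_poly _ _)).
    by rewrite P1 oppr_eq0 b_neq0.
  by rewrite P2 mulr0 subr0 sqr_ge0.
apply: (@real_rooted_Ppoly_from a b 2 n.+3 b_neq0 _ _ rr2) => // j /andP[j_ge2 _].
rewrite -mulrNN -invrN mulr_ge0 // ?invr_ge0 ?oppr_ge0 ?(ltW b_lt0) // subr_le0.
by apply: (le_trans a_le2); rewrite (ler_nat _ 2).
Qed.

Lemma real_rooted_Ppoly_pos (a b : R) N : 0 < b -> (forall j, (j < N)%N -> j%:R < a) ->
  real_rooted (Ppoly a b N).
Proof.
move=> b_gt0 aN; apply: (@real_rooted_Ppoly_from a b 0 N (lt0r_neq0 b_gt0) (leq0n N)); last first.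
  by rewrite Ppoly0; exact: real_rooted1.
move=> j /andP[_ jN]; rewrite divr_ge0 ?(ltW b_gt0) // subr_ge0 ltW //; exact: aN.
Qed.

Local Close Scope complex_scope.
Local Close Scope ring_scope.

(* ssrnat rebinds [<=] in [nat_scope], hence [%coq_nat] and [Z.le] below. *)
Theorem theorem3 :
  (forall alpha beta : R,
     (beta - 1) ^ 2 + 4 * alpha * beta >= 0 -> beta < 0 -> alpha <= 2 ->
     forall n : nat, (1 <= n)%coq_nat -> P_only_real_zeros alpha beta n)
  /\
  (forall alpha beta : R,
     beta > 0 -> alpha >= 1 ->
     forall n : nat, (1 <= n)%coq_nat -> Z.le (Z.of_nat n) (Rceil alpha) ->
       P_only_real_zeros alpha beta n).
Proof.
split.
- move=> a b /Rge_le disc_ge0 b_lt0 a_le2 n /ssrnat.leP n_gt0.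
  apply/real_rooted_P_only_real_zeros/real_rooted_Ppoly_neg => //.
  + by move: disc_ge0; rewrite !RealsE => /RleP.
  + exact/RltP.
  + exact/RleP.
- move=> a b b_gt0 _ n _ n_le_ceil.
  apply/real_rooted_P_only_real_zeros/real_rooted_Ppoly_pos; first exact/RltP.
  move=> j /ssrnat.ltP j_lt_n; apply/RltP; rewrite -INRE.
  exact: Rceil_gt_nat n_le_ceil j_lt_n.
Qed.
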